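(* For any partition $\lambda$ with at most $n$ parts and $x=(x_1,\dots,x_n)\in\mathbb{C}^n$, $$W_{\lambda}(x_1^{-1},\dots,x_n^{-1};q^{-1},p,t^{-1},a^{-1},b^{-1})=a^{-2|\lambda|}b^{2|\lambda|}q^{2|\lambda|}t^{2n(\lambda)-2(n-1)|\lambda|}\,W_{\lambda}(x_1,\dots,x_n;q,p,t,a,b),$$ where $|\lambda|=\sum_i\lambda_i$ and $n(\lambda)=\sum_i(i-1)\lambda_i$.
   Context: Fix $|p|<1$; parameters generic. $E(x)=(x;p)_\infty(p/x;p)_\infty$. For integer $m\ge0$, $(a)_m=(a;q,p)_m=\prod_{k=0}^{m-1}E(aq^k)$, for $m<0$, $(a)_m=1/(aq^m)_{-m}$; for a partition $\lambda$ with $n$ parts $(a)_\lambda=\prod_{i=1}^n(at^{1-i})_{\lambda_i}$; several arguments denote products; integer subscripts denote the single-integer symbol. When $W$ is evaluated with $q,t$ replaced by $q^{-1},t^{-1}$, all these symbols are formed with base $q^{-1}$ and $t^{-1}$. For $n$-part partitions with $\lambda_1\ge\mu_1\ge\dots\ge\lambda_n\ge\mu_n$, $\lambda_{n+1}=\mu_{n+1}=0$, $H_{\lambda/\mu}(q,p,t,b)=\prod_{1\le i<j\le n}\Big\{\frac{(q^{\mu_i-\mu_{j-1}}t^{j-i})_{\mu_{j-1}-\lambda_j}(q^{\lambda_i+\lambda_j}t^{3-j-i}b)_{\mu_{j-1}-\lambda_j}}{(q^{\mu_i-\mu_{j-1}+1}t^{j-i-1})_{\mu_{j-1}-\lambda_j}(q^{\lambda_i+\lambda_j+1}t^{2-j-i}b)_{\mu_{j-1}-\lambda_j}}\frac{(q^{\lambda_i-\mu_{j-1}+1}t^{j-i-1})_{\mu_{j-1}-\lambda_j}}{(q^{\lambda_i-\mu_{j-1}}t^{j-i})_{\mu_{j-1}-\lambda_j}}\Big\}\prod_{1\le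 i<j-1\le n}\frac{(q^{\mu_i+\lambda_j+1}t^{1-j-i}b)_{\mu_{j-1}-\lambda_j}}{(q^{\mu_i+\lambda_j}t^{2-j-i}b)_{\mu_{j-1}-\lambda_j}}$; for $x\in\mathbb{C}$, $W_{\lambda/\mu}(x;q,p,t,a,b)=H_{\lambda/\mu}\frac{(x^{-1},ax)_\lambda(qbx/t,qb/(axt))_\mu}{(x^{-1},ax)_\mu(qbx,qb/(ax))_\lambda}\prod_{i=1}^n\frac{E(bt^{1-2i}q^{2\mu_i})}{E(bt^{1-2i})}\frac{(bt^{1-2i})_{\mu_i+\lambda_{i+1}}}{(bqt^{-2i})_{\mu_i+\lambda_{i+1}}}t^{i(\mu_i-\lambda_{i+1})}$ (zero if the interlacing fails); recursively $W_{\lambda/\mu}(y,z_1,\dots,z_\ell;q,p,t,a,b)=\sum_\nu W_{\lambda/\nu}(yt^{-\ell};q,p,t,at^{2\ell},bt^\ell)W_{\nu/\mu}(z_1,\dots,z_\ell;q,p,t,a,b)$ over $\nu$ with $\lambda_1\ge\nu_1\ge\dots\ge\lambda_n\ge\nu_n\ge0$; $W_\lambda=W_{\lambda/0}$. *)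

From Stdlib Require Import Reals ZArith List Bool.
From Coquelicot Require Import Coquelicot.
Import ListNotations.
Open Scope bool_scope.

Definition zpow (z : C) (k : Z) : C :=
  match k with
  | Z0 => RtoC 1
  | Zpos n => Cpow z (Pos.to_nat n)
  | Zneg n => Cinv (Cpow z (Pos.to_nat n))
  end.

Definition cprodl (l : list C) : C := fold_right Cmult (RtoC 1) l.
Definition csuml (l : list C) : C := fold_right Cplus (RtoC 0) l.
(** product of f k for k = lo, ..., hi (empty if hi < lo) *)
Definition cprod_range (lo hi : nat) (f : nat -> C) : C :=
  cprodl (map f (seq lo (S hi - lo))).

(** (x;p)_infty = lim_{N -> oo} prod_{k<N} (1 - x p^k), the limit taken
    componentwise (real and imaginary parts); it converges for |p| < 1. *)
Definition qinf_partial (p x : C) (N : nat) : C :=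
  cprodl (map (fun k => Cminus (RtoC 1) (Cmult x (Cpow p k))) (seq 0 N)).
Definition qinf (p x : C) : C :=
  (real (Lim_seq (fun N => fst (qinf_partial p x N))),
   real (Lim_seq (fun N => snd (qinf_partial p x N)))).

Definition Eth (p x : C) : C := Cmult (qinf p x) (qinf p (Cdiv p x)).

Definition pochn (p q a : C) (k : nat) : C :=
  cprodl (map (fun j => Eth p (Cmult a (Cpow q j))) (seq 0 k)).
Definition poch (p q a : C) (m : Z) : C :=
  match m with
  | Z0 => RtoC 1
  | Zpos k => pochn p q a (Pos.to_nat k)
  | Zneg k => Cinv (pochn p q (Cmult a (zpow q (Zneg k))) (Pos.to_nat k))
  end.

(** Partitions with n parts are lists of length n: [lam = [λ_1; ...; λ_n]].
    [part lam i] is λ_i (1-indexed), and is 0 for i > n (so λ_{n+1} = 0). *)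
Definition part (lam : list nat) (i : nat) : Z := Z.of_nat (nth (i - 1) lam 0%nat).

Definition poch_part (p q t a : C) (lam : list nat) : C :=
  cprod_range 1 (length lam)
    (fun i => poch p q (Cmult a (zpow t (1 - Z.of_nat i))) (part lam i)).

Definition interlaces (lam mu : list nat) : bool :=
  Nat.eqb (length lam) (length mu) &&
  forallb (fun i => Z.leb (part mu i) (part lam i) && Z.leb (part lam (S i)) (part mu i))
          (seq 1 (length lam)).

Definition Hcoef (q p t b : C) (lam mu : list nat) : C :=
  let n := length lam in
  let L := part lam in
  let M := part mu in
  let P := poch p q in
  let mon (e1 e2 : Z) (c : C) := Cmult (Cmult (zpow q e1) (zpow t e2)) c in
  Cmult
  (cprod_range 1 n (fun i => cprod_range (S i) n (fun j =>
     let zi := Z.of_nat i in let zj := Z.of_nat j in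
     let m := (M (j - 1)%nat - L j)%Z in
     Cmult
      (Cdiv (Cmult (P (mon (M i - M (j - 1)%nat)%Z (zj - zi)%Z (RtoC 1)) m)
                   (P (mon (L i + L j)%Z (3 - zj - zi)%Z b) m))
            (Cmult (P (mon (M i - M (j - 1)%nat + 1)%Z (zj - zi - 1)%Z (RtoC 1)) m)
                   (P (mon (L i + L j + 1)%Z (2 - zj - zi)%Z b) m)))
      (Cdiv (P (mon (L i - M (j - 1)%nat + 1)%Z (zj - zi - 1)%Z (RtoC 1)) m)
            (P (mon (L i - M (j - 1)%nat)%Z (zj - zi)%Z (RtoC 1)) m)))))
  (* 1 <= i < j-1 <= n, i.e. i+2 <= j <= n+1 *)
  (cprod_range 1 n (fun i => cprod_range (S (S i)) (S n) (fun j =>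
     let zi := Z.of_nat i in let zj := Z.of_nat j in
     let m := (M (j - 1)%nat - L j)%Z in
     Cdiv (P (mon (M i + L j + 1)%Z (1 - zj - zi)%Z b) m)
          (P (mon (M i + L j)%Z (2 - zj - zi)%Z b) m)))).

Definition W1 (x q p t a b : C) (lam mu : list nat) : C :=
  if interlaces lam mu then
    let n := length lam in
    let PP := poch_part p q t in
    Cmult (Cmult (Hcoef q p t b lam mu)
      (Cdiv (Cmult (Cmult (PP (Cinv x) lam) (PP (Cmult a x) lam))
                   (Cmult (PP (Cdiv (Cmult (Cmult q b) x) t) mu)
                          (PP (Cdiv (Cmult q b) (Cmult (Cmult a x) t)) mu)))
            (Cmult (Cmult (PP (Cinv x) mu) (PP (Cmult a x) mu))
                   (Cmult (PP (Cmult (Cmult q b) x) lam)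
                          (PP (Cdiv (Cmult q b) (Cmult a x)) lam)))))
    (cprod_range 1 n (fun i =>
       let zi := Z.of_nat i in
       let bt := Cmult b (zpow t (1 - 2 * zi)) in
       let s := (part mu i + part lam (S i))%Z in
       Cmult (Cmult
         (Cdiv (Eth p (Cmult bt (zpow q (2 * part mu i)))) (Eth p bt))
         (Cdiv (poch p q bt s)
               (poch p q (Cmult (Cmult b q) (zpow t (- 2 * zi))) s)))
         (zpow t (zi * (part mu i - part lam (S i))))))
  else RtoC 0.

Fixpoint interlacing_below (lam : list nat) : list (list nat) :=
  match lam with
  | [] => [[]]
  | l :: rest =>
      let lo := hd 0%nat rest in
      flat_map (fun v => map (cons v) (interlacing_below rest)) (seq lo (S l - lo))
  end.

(** Multivariable W_{λ/μ}(x_1,...,x_l;q,p,t,a,b), defined by the branching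
    recursion.  (For the empty variable list we use the Kronecker delta.) *)
Fixpoint Wm (xs : list C) (q p t a b : C) (lam mu : list nat) {struct xs} : C :=
  match xs with
  | [] => if list_eq_dec Nat.eq_dec lam mu then RtoC 1 else RtoC 0
  | [y] => W1 y q p t a b lam mu
  | y :: zs =>
      let l := Z.of_nat (length zs) in
      csuml (map (fun nu =>
        Cmult (W1 (Cmult y (zpow t (- l))) q p t
                  (Cmult a (zpow t (2 * l))) (Cmult b (zpow t l)) lam nu)
              (Wm zs q p t a b nu mu))
        (interlacing_below lam))
  end.

Definition Wpart (xs : list C) (q p t a b : C) (lam : list nat) : C :=
  Wm xs q p t a b lam (repeat 0%nat (length lam)).

Definition psize (lam : list nat) : Z := Z.of_nat (fold_right Nat.add 0%nat lam).
Definition pn (lam : list nat) : Z :=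
  fold_right Z.add 0%Z
    (map (fun i => (Z.of_nat (i - 1) * part lam i)%Z) (seq 1 (length lam))).

Definition is_partition (lam : list nat) : Prop :=
  forall i, (1 <= i)%nat -> (i < length lam)%nat -> (part lam (S i) <= part lam i)%Z.

Definition generic (p q t a b : C) (xs : list C) : Prop :=
  forall (i j k l m : Z) (e : list Z),
    length e = length xs ->
    Cmult (Cmult (Cmult (Cmult (zpow q i) (zpow t j)) (zpow a k)) (zpow b l))
          (cprodl (map (fun xe : C * Z => let (x, z) := xe in zpow x z) (combine xs e)))
    = zpow p m ->
    i = 0%Z /\ j = 0%Z /\ k = 0%Z /\ l = 0%Z /\ List.Forall (fun z => z = 0%Z) e.

(** The only transcendental ingredient of W is the theta function, and it
    satisfies E(1/x) = -x^{-1} E(x), a consequence of (x;p)_oo = (1-x) (px;p)_oo.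
    Hence inverting the base and the argument of an elliptic Pochhammer symbol
    multiplies it by the monomial (-1)^m A^{-m} q^{-m(m-1)/2}.  In the
    one-variable function W_{λ/μ} these factors cancel in pairs up to a
    monomial in q, t, a, b whose exponents are linear in |λ|, |μ|, n(λ), n(μ)
    and μ_n.  Along the branching rule the terms with ν_n <> 0 vanish (a
    partition with more nonzero parts than variables contributes nothing), so
    μ_n drops out, and the monomials of the successive branching steps, with
    a and b shifted by powers of t, multiply to the stated one. *)

From Stdlib Require Import Reals ZArith List Lra Lia.
From Coquelicot Require Import Coquelicot.
Import ListNotations.

Local Open Scope C_scope.

Lemma Cinv_0 : Cinv 0 = 0.
Proof. apply injective_projections; simpl; unfold Rdiv; ring. Qed.

Lemma Cinv_1 : Cinv 1 = 1.
Proof. field. Qed.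

Lemma Cinv_neq_0 (x : C) : x <> 0 -> Cinv x <> 0.
Proof. intros Hx H. apply C1_nz. rewrite <- (Cinv_r x Hx), H. ring. Qed.

Lemma Cinv_mult_distr (x y : C) : Cinv (x * y) = Cinv x * Cinv y.
Proof.
  destruct (Ceq_dec x 0) as [->|Hx]; [rewrite Cmult_0_l, Cinv_0; ring|].
  destruct (Ceq_dec y 0) as [->|Hy]; [rewrite Cmult_0_r, Cinv_0; ring|].
  field. auto.
Qed.

Lemma Cinv_involutive (x : C) : Cinv (Cinv x) = x.
Proof.
  destruct (Ceq_dec x 0) as [->|Hx]; [rewrite !Cinv_0; reflexivity|].
  field. auto.
Qed.

Lemma Copp_1_neq_0 : (-1 : C) <> 0.
Proof. intros H. apply C1_nz. replace (RtoC 1) with (- (-1 : C)) by ring. rewrite H. ring. Qed.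

Lemma zpow_of_nat (z : C) (n : nat) : zpow z (Z.of_nat n) = Cpow z n.
Proof. destruct n; simpl; [reflexivity|]. rewrite SuccNat2Pos.id_succ. reflexivity. Qed.

Lemma zpow_opp_of_nat (z : C) (n : nat) : zpow z (- Z.of_nat n) = Cinv (Cpow z n).
Proof. destruct n; simpl; [field|]. rewrite SuccNat2Pos.id_succ. reflexivity. Qed.

Lemma Z_of_nat_or_opp (k : Z) : exists n, k = Z.of_nat n \/ k = (- Z.of_nat n)%Z.
Proof. exists (Z.abs_nat k). lia. Qed.

Lemma zpow_mul_l (z w : C) (k : Z) : zpow (z * w) k = zpow z k * zpow w k.
Proof.
  destruct (Z_of_nat_or_opp k) as [n [->| ->]].
  - rewrite !zpow_of_nat. apply Cpow_mult_l.
  - rewrite !zpow_opp_of_nat, Cpow_mult_l. apply Cinv_mult_distr.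
Qed.

Section IntegerPowers.

Variable z : C.
Hypothesis Hz : z <> 0.

Lemma zpow_neq_0 (k : Z) : zpow z k <> 0.
Proof.
  destruct (Z_of_nat_or_opp k) as [n [->| ->]].
  - rewrite zpow_of_nat. apply Cpow_nz, Hz.
  - rewrite zpow_opp_of_nat. apply Cinv_neq_0, Cpow_nz, Hz.
Qed.

Lemma zpow_succ_r (k : Z) : zpow z (k + 1) = zpow z k * z.
Proof.
  destruct (Z_of_nat_or_opp k) as [n [->| ->]].
  - replace (Z.of_nat n + 1)%Z with (Z.of_nat (S n)) by lia.
    rewrite !zpow_of_nat. simpl. ring.
  - destruct n as [|n]; [simpl; ring|].
    replace (- Z.of_nat (S n) + 1)%Z with (- Z.of_nat n)%Z by lia.
    rewrite !zpow_opp_of_nat. simpl. field. split; [apply Cpow_nz|]; auto.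
Qed.

Lemma zpow_add_r (m k : Z) : zpow z (m + k) = zpow z m * zpow z k.
Proof.
  induction k as [|k IH|k IH] using Z.peano_ind.
  - rewrite Z.add_0_r. simpl. ring.
  - rewrite <- !Z.add_1_r, Z.add_assoc, !zpow_succ_r, IH. ring.
  - transitivity (zpow z (m + Z.pred k + 1) * / z); [rewrite zpow_succ_r; field; auto|].
    replace (m + Z.pred k + 1)%Z with (m + k)%Z by lia.
    rewrite IH. replace (zpow z k) with (zpow z (Z.pred k + 1)) by (f_equal; lia).
    rewrite zpow_succ_r. field. auto.
Qed.

Lemma zpow_opp_r (k : Z) : zpow z (- k) = Cinv (zpow z k).
Proof.
  pose proof (zpow_neq_0 k).
  transitivity (zpow z (- k) * zpow z k * / zpow z k); [field; auto|].
  rewrite <- zpow_add_r, Z.add_opp_diag_l. simpl. ring.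
Qed.

Lemma zpow_inv_l (k : Z) : zpow (Cinv z) k = Cinv (zpow z k).
Proof.
  destruct (Z_of_nat_or_opp k) as [n [->| ->]].
  - rewrite !zpow_of_nat. apply Cpow_inv, Hz.
  - rewrite !zpow_opp_of_nat, Cpow_inv by exact Hz. reflexivity.
Qed.

Lemma Cpow_zpow (k : Z) (n : nat) : Cpow (zpow z k) n = zpow z (k * Z.of_nat n).
Proof.
  induction n as [|n IH].
  - rewrite Z.mul_0_r. reflexivity.
  - rewrite Cpow_S, IH, Nat2Z.inj_succ, Z.mul_succ_r, zpow_add_r. ring.
Qed.

Lemma zpow_mul_r (k e : Z) : zpow (zpow z k) e = zpow z (k * e).
Proof.
  destruct (Z_of_nat_or_opp e) as [n [->| ->]].
  - rewrite zpow_of_nat. apply Cpow_zpow.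
  - rewrite zpow_opp_of_nat, Cpow_zpow, <- zpow_opp_r. f_equal. ring.
Qed.

End IntegerPowers.

Lemma Cinv_mult_zpow (x t : C) (k : Z) : t <> 0 ->
  Cinv (x * zpow t k) = Cinv x * zpow (Cinv t) k.
Proof. intros Ht. rewrite Cinv_mult_distr, zpow_inv_l by exact Ht. reflexivity. Qed.

Create HintDb nonzero.
#[local] Hint Resolve Cmult_neq_0 zpow_neq_0 Cinv_neq_0 Cpow_nz Copp_1_neq_0 C1_nz : nonzero.

Ltac nonzero := auto 20 with nonzero.

(** Elliptic Pochhammer symbols and theta values may vanish, so [field] can
    only be used after their inverses have been made opaque. *)
Ltac hide_inverses :=
  repeat match goal with
  | |- context [Cinv (poch ?p ?q ?A ?m)] => generalize (Cinv (poch p q A m)); intro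
  | |- context [Cinv (poch_part ?p ?q ?t ?A ?l)] => generalize (Cinv (poch_part p q t A l)); intro
  | |- context [Cinv (Eth ?p ?A)] => generalize (Cinv (Eth p A)); intro
  end.

Definition zsum (lo hi : nat) (f : nat -> Z) : Z :=
  fold_right Z.add 0%Z (map f (seq lo (S hi - lo))).

Lemma zsum_ext (lo hi : nat) (f g : nat -> Z) :
  (forall i, (lo <= i <= hi)%nat -> f i = g i) -> zsum lo hi f = zsum lo hi g.
Proof.
  intros H. unfold zsum. f_equal. apply map_ext_in. intros i Hi.
  apply in_seq in Hi. apply H. lia.
Qed.

Lemma zsum_add (lo hi : nat) (f g : nat -> Z) :
  zsum lo hi (fun i => f i + g i)%Z = (zsum lo hi f + zsum lo hi g)%Z.
Proof.
  unfold zsum. induction (seq lo (S hi - lo)) as [|i l IH]; simpl; [reflexivity | rewrite IH; ring].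
Qed.

Lemma zsum_scal (lo hi : nat) (c : Z) (f : nat -> Z) :
  zsum lo hi (fun i => c * f i)%Z = (c * zsum lo hi f)%Z.
Proof.
  unfold zsum. induction (seq lo (S hi - lo)) as [|i l IH]; simpl; [ring | rewrite IH; ring].
Qed.

Lemma zsum_opp (lo hi : nat) (f : nat -> Z) : zsum lo hi (fun i => - f i)%Z = (- zsum lo hi f)%Z.
Proof.
  replace (- zsum lo hi f)%Z with (-1 * zsum lo hi f)%Z by ring.
  rewrite <- zsum_scal. apply zsum_ext. intros. ring.
Qed.

Lemma zsum_sub (lo hi : nat) (f g : nat -> Z) :
  zsum lo hi (fun i => f i - g i)%Z = (zsum lo hi f - zsum lo hi g)%Z.
Proof. unfold Z.sub. rewrite <- zsum_opp, <- zsum_add. reflexivity. Qed.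

Lemma zsum_const (lo hi : nat) (c : Z) : zsum lo hi (fun _ => c) = (Z.of_nat (S hi - lo) * c)%Z.
Proof.
  unfold zsum. generalize (S hi - lo)%nat as k. intros k. revert lo.
  induction k as [|k IH]; intros lo; cbn [seq map fold_right]; [lia | rewrite IH; lia].
Qed.

Lemma zsum_empty (hi : nat) (f : nat -> Z) : zsum (S hi) hi f = 0%Z.
Proof. unfold zsum. rewrite Nat.sub_diag. reflexivity. Qed.

Lemma zsum_first (lo hi : nat) (f : nat -> Z) :
  (lo <= hi)%nat -> zsum lo hi f = (f lo + zsum (S lo) hi f)%Z.
Proof.
  intros H. unfold zsum. replace (S hi - lo)%nat with (S (S hi - S lo)) by lia. reflexivity.
Qed.

Lemma zsum_last (lo hi : nat) (f : nat -> Z) :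
  (lo <= S hi)%nat -> zsum lo (S hi) f = (zsum lo hi f + f (S hi))%Z.
Proof.
  intros H. unfold zsum. replace (S (S hi) - lo)%nat with (S (S hi - lo)) by lia.
  rewrite seq_S, map_app, fold_right_app. cbn [map fold_right].
  replace (lo + (S hi - lo))%nat with (S hi) by lia.
  induction (map f (seq lo (S hi - lo))) as [|x l IH]; cbn [fold_right]; lia.
Qed.

Lemma zsum_shift (lo hi : nat) (f : nat -> Z) :
  zsum lo hi (fun i => f (S i)) = zsum (S lo) (S hi) f.
Proof.
  unfold zsum. replace (S (S hi) - S lo)%nat with (S hi - lo)%nat by lia.
  rewrite <- seq_shift, map_map. reflexivity.
Qed.

Lemma zsum_telescope_tail (f : nat -> Z) (i n : nat) : (i <= n)%nat ->
  (zsum (S i) n f - zsum (S (S i)) (S n) f = f (S i) - f (S n))%Z.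
Proof.
  intros Hi. destruct (Nat.eq_dec i n) as [->|Hne].
  - rewrite !zsum_empty. ring.
  - rewrite (zsum_first (S i) n), (zsum_last (S (S i)) n) by lia. ring.
Qed.

Lemma cprodl_app (l1 l2 : list C) : cprodl (l1 ++ l2) = cprodl l1 * cprodl l2.
Proof. induction l1 as [|x l1 IH]; simpl; [ring | rewrite IH; ring]. Qed.

Lemma cprod_range_ext (lo hi : nat) (f g : nat -> C) :
  (forall i, f i = g i) -> cprod_range lo hi f = cprod_range lo hi g.
Proof. intros H. unfold cprod_range. f_equal. apply map_ext, H. Qed.

Lemma cprod_range_mult (lo hi : nat) (f g : nat -> C) :
  cprod_range lo hi (fun i => f i * g i) = cprod_range lo hi f * cprod_range lo hi g.
Proof.
  unfold cprod_range. induction (seq lo (S hi - lo)) as [|i l IH]; simpl; [ring | rewrite IH; ring].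
Qed.

Lemma cprod_range_zpow (z : C) (lo hi : nat) (f : nat -> Z) : z <> 0 ->
  cprod_range lo hi (fun i => zpow z (f i)) = zpow z (zsum lo hi f).
Proof.
  intros Hz. unfold cprod_range, zsum.
  induction (seq lo (S hi - lo)) as [|i l IH]; simpl; [reflexivity | rewrite IH, zpow_add_r; auto].
Qed.

Lemma cprod_range_zpow_mult (z : C) (lo hi : nat) (f : nat -> Z) (g : nat -> C) : z <> 0 ->
  cprod_range lo hi (fun i => zpow z (f i) * g i) = zpow z (zsum lo hi f) * cprod_range lo hi g.
Proof. intros Hz. rewrite cprod_range_mult, cprod_range_zpow by exact Hz. reflexivity. Qed.

Lemma cprod_range_neq_0 (lo hi : nat) (f : nat -> C) :
  (forall i, f i <> 0) -> cprod_range lo hi f <> 0.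
Proof.
  intros H. unfold cprod_range.
  induction (seq lo (S hi - lo)) as [|i l IH]; simpl; [apply C1_nz | apply Cmult_neq_0; auto].
Qed.

Lemma csuml_map_0 {A : Type} (f : A -> C) (l : list A) :
  (forall x, In x l -> f x = 0) -> csuml (map f l) = 0.
Proof.
  induction l as [|x l IH]; intros H; simpl; [reflexivity|].
  rewrite H, IH; [ring | intros y Hy; apply H; right; exact Hy | left; reflexivity].
Qed.

Lemma csuml_map_scal {A : Type} (c : C) (f : A -> C) (l : list A) :
  csuml (map (fun x => c * f x) l) = c * csuml (map f l).
Proof. induction l as [|x l IH]; simpl; [ring | rewrite IH; ring]. Qed.

Lemma part_nonneg (lam : list nat) (k : nat) : (0 <= part lam k)%Z.
Proof. unfold part. lia. Qed.

Lemma part_overflow (lam : list nat) (k : nat) : (length lam < k)%nat -> part lam k = 0%Z.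
Proof. intros H. unfold part. rewrite nth_overflow by lia. reflexivity. Qed.

Lemma part_repeat_0 (n k : nat) : part (repeat 0%nat n) k = 0%Z.
Proof. unfold part. rewrite nth_repeat. reflexivity. Qed.

Lemma psize_zsum (lam : list nat) : psize lam = zsum 1 (length lam) (part lam).
Proof.
  induction lam as [|x l IH]; [reflexivity|].
  simpl length. rewrite zsum_first, <- zsum_shift by lia.
  rewrite (zsum_ext 1 (length l) (fun i => part (x :: l) (S i)) (part l)).
  - rewrite <- IH. unfold psize, part. simpl. lia.
  - intros [|i] Hi; [lia|]. unfold part. simpl. rewrite Nat.sub_0_r. reflexivity.
Qed.

Lemma pn_zsum (lam : list nat) :
  pn lam = zsum 1 (length lam) (fun i => Z.of_nat (i - 1) * part lam i)%Z.
Proof. unfold pn, zsum. rewrite Nat.sub_succ, Nat.sub_0_r. reflexivity. Qed.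

Lemma psize_repeat_0 (n : nat) : psize (repeat 0%nat n) = 0%Z.
Proof.
  rewrite psize_zsum, (zsum_ext _ _ _ (fun _ => 0%Z)), zsum_const; intros;
    rewrite ?part_repeat_0; lia.
Qed.

Lemma pn_repeat_0 (n : nat) : pn (repeat 0%nat n) = 0%Z.
Proof.
  rewrite pn_zsum, (zsum_ext _ _ _ (fun _ => 0%Z)), zsum_const; intros;
    rewrite ?part_repeat_0; lia.
Qed.

Lemma zsum_index_part (lam : list nat) (n : nat) : length lam = n ->
  zsum 1 n (fun i => Z.of_nat i * part lam i)%Z = (pn lam + psize lam)%Z.
Proof.
  intros <-. rewrite pn_zsum, psize_zsum, <- zsum_add. apply zsum_ext. intros i Hi.
  rewrite Nat2Z.inj_sub by lia. ring.
Qed.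

Lemma zsum_index_part_succ (lam : list nat) (n : nat) : length lam = n ->
  zsum 1 n (fun i => Z.of_nat i * part lam (S i))%Z = pn lam.
Proof.
  intros Hn. rewrite pn_zsum, Hn.
  transitivity (zsum 2 (S n) (fun i => Z.of_nat (i - 1) * part lam i)%Z).
  - rewrite <- zsum_shift. apply zsum_ext. intros i Hi. simpl. rewrite Nat.sub_0_r. reflexivity.
  - destruct n as [|n]; [rewrite !zsum_empty; reflexivity|].
    rewrite zsum_last, (zsum_first 1 (S n)), (part_overflow lam (S (S n))) by lia.
    simpl. ring.
Qed.

(** * The theta function *)

Lemma ex_finite_lim_seq_geom_increments (u : nat -> R) (K r : R) :
  (0 <= r < 1)%R -> (forall k, Rabs (u (S k) - u k) <= K * r ^ k)%R ->
  ex_finite_lim_seq u.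
Proof.
  intros Hr Hu.
  assert (Hs : ex_series (fun k => u (S k) - u k)%R).
  { apply (@ex_series_le R_AbsRing R_CompleteNormedModule _ (fun k => K * r ^ k)%R); [exact Hu|].
    apply (ex_series_scal_l (V := R_NormedModule)), ex_series_geom.
    rewrite Rabs_pos_eq; lra. }
  destruct Hs as [L HL]. exists (u O + L)%R.
  apply is_lim_seq_incr_1.
  apply is_lim_seq_ext with (fun N => u O + sum_n (fun k => u (S k) - u k) N)%R.
  - intros N. induction N as [|N IH].
    + rewrite sum_O. ring.
    + rewrite sum_Sn, <- IH. unfold plus. simpl. ring.
  - apply is_lim_seq_plus'; [apply is_lim_seq_const | exact HL].
Qed.

Definition is_lim_seq_C (u : nat -> C) (l : C) : Prop :=
  is_lim_seq (fun N => fst (u N)) (fst l) /\ is_lim_seq (fun N => snd (u N)) (snd l).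

Lemma is_lim_seq_C_unique (u : nat -> C) (l1 l2 : C) :
  is_lim_seq_C u l1 -> is_lim_seq_C u l2 -> l1 = l2.
Proof.
  intros [H1 H1'] [H2 H2'].
  apply is_lim_seq_unique in H1, H1', H2, H2'.
  apply injective_projections; [rewrite H1 in H2 | rewrite H1' in H2']; congruence.
Qed.

Lemma is_lim_seq_C_scal_l (c : C) (u v : nat -> C) (l : C) :
  (forall N, v N = c * u N) -> is_lim_seq_C u l -> is_lim_seq_C v (c * l).
Proof.
  intros Hv [H1 H2]. split.
  - apply is_lim_seq_ext with (fun N => fst c * fst (u N) - snd c * snd (u N))%R.
    { intros N. rewrite Hv. reflexivity. }
    apply is_lim_seq_minus';
      [exact (is_lim_seq_scal_l _ _ _ H1) | exact (is_lim_seq_scal_l _ _ _ H2)].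
  - apply is_lim_seq_ext with (fun N => fst c * snd (u N) + snd c * fst (u N))%R.
    { intros N. rewrite Hv. reflexivity. }
    apply is_lim_seq_plus';
      [exact (is_lim_seq_scal_l _ _ _ H2) | exact (is_lim_seq_scal_l _ _ _ H1)].
Qed.

Section ThetaFunction.

Variable p : C.
Hypothesis Hp : (Cmod p < 1)%R.

Lemma qinf_partial_succ_r (y : C) (N : nat) :
  qinf_partial p y (S N) = qinf_partial p y N * (1 - y * Cpow p N).
Proof. unfold qinf_partial. rewrite seq_S, map_app, cprodl_app. simpl. ring. Qed.

Lemma qinf_partial_succ_l (y : C) (N : nat) :
  qinf_partial p y (S N) = (1 - y) * qinf_partial p (p * y) N.
Proof.
  unfold qinf_partial. simpl. rewrite Cmult_1_r, <- seq_shift, map_map.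
  do 2 f_equal. apply map_ext. intros k. simpl. ring.
Qed.

Lemma qinf_partial_bounded (y : C) (N : nat) :
  (Cmod (qinf_partial p y N) <= exp (Cmod y / (1 - Cmod p)))%R.
Proof.
  pose proof (Cmod_ge_0 p). pose proof (Cmod_ge_0 y).
  assert (Hgeom : forall M, (Cmod (qinf_partial p y M)
                             <= exp (Cmod y * (1 - Cmod p ^ M) / (1 - Cmod p)))%R).
  { induction M as [|M IH].
    - unfold qinf_partial. simpl.
      rewrite Cmod_1, Rminus_diag, Rmult_0_r, Rdiv_0_l, exp_0. lra.
    - rewrite qinf_partial_succ_r, Cmod_mult.
      assert (Hf : (Cmod (1 - y * Cpow p M) <= 1 + Cmod y * Cmod p ^ M)%R).
      { eapply Rle_trans; [apply Cmod_triangle|].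
        rewrite Cmod_1, Cmod_opp, Cmod_mult, Cmod_pow. lra. }
      eapply Rle_trans; [apply Rmult_le_compat; eauto using Cmod_ge_0|].
      eapply Rle_trans; [apply Rmult_le_compat_l; [left; apply exp_pos | apply exp_ineq1_le]|].
      rewrite <- exp_plus. right. f_equal. simpl. field. lra. }
  eapply Rle_trans; [apply Hgeom|].
  assert (Hle : (Cmod y * (1 - Cmod p ^ N) / (1 - Cmod p) <= Cmod y / (1 - Cmod p))%R).
  { apply Rmult_le_compat_r; [left; apply Rinv_0_lt_compat; lra|].
    pose proof (pow_le (Cmod p) N H). nra. }
  destruct Hle as [Hlt| ->]; [left; apply exp_increasing, Hlt | lra].
Qed.

Lemma qinf_partial_cvg (y : C) : is_lim_seq_C (qinf_partial p y) (qinf p y).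
Proof.
  pose proof (Cmod_ge_0 p).
  set (B := exp (Cmod y / (1 - Cmod p))).
  assert (Hinc : forall k, (Cmod (qinf_partial p y (S k) - qinf_partial p y k)
                            <= B * Cmod y * Cmod p ^ k)%R).
  { intros k. rewrite qinf_partial_succ_r.
    replace (qinf_partial p y k * (1 - y * Cpow p k) - qinf_partial p y k)
      with (- (qinf_partial p y k * y * Cpow p k)) by ring.
    rewrite Cmod_opp, !Cmod_mult, Cmod_pow.
    repeat apply Rmult_le_compat_r; auto using Cmod_ge_0, pow_le.
    apply qinf_partial_bounded. }
  assert (Hfst : ex_finite_lim_seq (fun N => fst (qinf_partial p y N))).
  { apply (ex_finite_lim_seq_geom_increments _ (B * Cmod y) (Cmod p)); [lra|].
    intros k. eapply Rle_trans; [|apply Hinc]. eapply Rle_trans; [|apply Rmax_Cmod].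
    apply Rmax_l. }
  assert (Hsnd : ex_finite_lim_seq (fun N => snd (qinf_partial p y N))).
  { apply (ex_finite_lim_seq_geom_increments _ (B * Cmod y) (Cmod p)); [lra|].
    intros k. eapply Rle_trans; [|apply Hinc]. eapply Rle_trans; [|apply Rmax_Cmod].
    apply Rmax_r. }
  destruct Hfst as [l1 H1], Hsnd as [l2 H2].
  unfold qinf. split; simpl;
    [rewrite (is_lim_seq_unique _ _ H1) | rewrite (is_lim_seq_unique _ _ H2)]; assumption.
Qed.

Lemma qinf_shift (y : C) : qinf p y = (1 - y) * qinf p (p * y).
Proof.
  apply (is_lim_seq_C_unique (fun N => qinf_partial p y (S N))).
  - destruct (qinf_partial_cvg y) as [H1 H2].
    apply is_lim_seq_incr_1 in H1, H2. split; assumption.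
  - apply is_lim_seq_C_scal_l with (qinf_partial p (p * y)).
    + apply qinf_partial_succ_l.
    + apply qinf_partial_cvg.
Qed.

Lemma Eth_inv (x : C) : x <> 0 -> Eth p (Cinv x) = - Cinv x * Eth p x.
Proof.
  intros Hx. unfold Eth, Cdiv. rewrite Cinv_involutive, (qinf_shift (Cinv x)), (qinf_shift x).
  field. exact Hx.
Qed.

End ThetaFunction.

(** * Inverting elliptic Pochhammer symbols *)

(** [m * (m - 1)] is even, so the division is exact. *)
Definition tri (m : Z) : Z := m * (m - 1) / 2.

Lemma tri_double (m : Z) : (2 * tri m = m * (m - 1))%Z.
Proof.
  unfold tri. destruct (Z.Even_or_Odd m) as [[j ->]|[j ->]].
  - replace (2 * j * (2 * j - 1))%Z with (j * (2 * j - 1) * 2)%Z by ring.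
    rewrite Z.div_mul by lia. ring.
  - replace ((2 * j + 1) * (2 * j + 1 - 1))%Z with ((2 * j + 1) * j * 2)%Z by ring.
    rewrite Z.div_mul by lia. ring.
Qed.

Lemma tri_succ (m : Z) : tri (m + 1) = (tri m + m)%Z.
Proof. pose proof (tri_double m). pose proof (tri_double (m + 1)). nia. Qed.

Lemma tri_opp (m : Z) : tri (- m) = (tri m + m)%Z.
Proof. pose proof (tri_double m). pose proof (tri_double (- m)). nia. Qed.

(** The product over k < m of the factors -(A q^k)^{-1} produced by [Eth_inv]. *)
Definition poch_inv_factor (q A : C) (m : Z) : C :=
  zpow (-1) m * zpow A (- m) * zpow q (- tri m).

Lemma poch_inv_factor_neq_0 (q A : C) (m : Z) :
  q <> 0 -> A <> 0 -> poch_inv_factor q A m <> 0.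
Proof. intros Hq HA. unfold poch_inv_factor. nonzero. Qed.

#[local] Hint Resolve poch_inv_factor_neq_0 : nonzero.

Lemma poch_inv_factor_scal (q c A : C) (m : Z) :
  poch_inv_factor q (c * A) m = zpow c (- m) * poch_inv_factor q A m.
Proof. unfold poch_inv_factor. rewrite zpow_mul_l. ring. Qed.

Section PochhammerInversion.

Variables (p q : C).
Hypotheses (Hp : (Cmod p < 1)%R) (Hq : q <> 0).

Lemma poch_inv_factor_succ (A : C) (m : Z) : A <> 0 ->
  poch_inv_factor q A (m + 1) = poch_inv_factor q A m * - Cinv (A * zpow q m).
Proof.
  intros HA. unfold poch_inv_factor.
  rewrite tri_succ, !Z.opp_add_distr, !zpow_add_r, !zpow_opp_r by nonzero.
  simpl (zpow _ 1). field. repeat split; nonzero.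
Qed.

Lemma poch_inv_factor_opp (A : C) (m : Z) : A <> 0 ->
  Cinv (poch_inv_factor q (A * zpow q m) (- m)) = poch_inv_factor q A m.
Proof.
  intros HA. unfold poch_inv_factor.
  rewrite Z.opp_involutive, tri_opp, zpow_mul_l, zpow_mul_r by exact Hq.
  replace (m * m)%Z with (tri m + m + tri m)%Z by (pose proof (tri_double m); lia).
  rewrite !zpow_opp_r, !zpow_add_r by nonzero.
  field. repeat split; nonzero.
Qed.

Lemma pochn_inv (A : C) (k : nat) : A <> 0 ->
  pochn p (Cinv q) (Cinv A) k = poch_inv_factor q A (Z.of_nat k) * pochn p q A k.
Proof.
  intros HA. induction k as [|k IH]; [unfold pochn, poch_inv_factor; simpl; ring|].
  unfold pochn in *. rewrite seq_S, !map_app, !cprodl_app, IH, Nat2Z.inj_succ, <- Z.add_1_r.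
  rewrite poch_inv_factor_succ, zpow_of_nat by exact HA. simpl.
  rewrite Cpow_inv, <- Cinv_mult_distr, Eth_inv by nonzero.
  ring.
Qed.

Lemma poch_inv (A : C) (m : Z) : A <> 0 ->
  poch p (Cinv q) (Cinv A) m = poch_inv_factor q A m * poch p q A m.
Proof.
  intros HA. destruct m as [|k|k]; unfold poch.
  - unfold poch_inv_factor. simpl. ring.
  - rewrite pochn_inv, positive_nat_Z by exact HA. reflexivity.
  - rewrite zpow_inv_l, <- Cinv_mult_distr, pochn_inv, positive_nat_Z by nonzero.
    change (Z.pos k) with (- Z.neg k)%Z.
    rewrite Cinv_mult_distr, poch_inv_factor_opp by exact HA. reflexivity.
Qed.

End PochhammerInversion.

Definition poch_part_inv_factor (q t A : C) (lam : list nat) : C :=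
  cprod_range 1 (length lam)
    (fun i => poch_inv_factor q (A * zpow t (1 - Z.of_nat i)) (part lam i)).

Lemma poch_part_inv_factor_neq_0 (q t A : C) (lam : list nat) :
  q <> 0 -> t <> 0 -> A <> 0 -> poch_part_inv_factor q t A lam <> 0.
Proof. intros Hq Ht HA. apply cprod_range_neq_0. intros i. nonzero. Qed.

#[local] Hint Resolve poch_part_inv_factor_neq_0 : nonzero.

Lemma poch_part_inv_factor_scal (q t c A : C) (lam : list nat) : c <> 0 ->
  poch_part_inv_factor q t (c * A) lam
  = zpow c (- psize lam) * poch_part_inv_factor q t A lam.
Proof.
  intros Hc. unfold poch_part_inv_factor.
  rewrite psize_zsum, <- zsum_opp, <- cprod_range_zpow_mult by exact Hc.
  apply cprod_range_ext. intros i. rewrite <- Cmult_assoc. apply poch_inv_factor_scal.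
Qed.

Lemma poch_part_inv (p q t A : C) (lam : list nat) :
  (Cmod p < 1)%R -> q <> 0 -> t <> 0 -> A <> 0 ->
  poch_part p (Cinv q) (Cinv t) (Cinv A) lam
  = poch_part_inv_factor q t A lam * poch_part p q t A lam.
Proof.
  intros Hp Hq Ht HA. unfold poch_part, poch_part_inv_factor.
  rewrite <- cprod_range_mult. apply cprod_range_ext. intros i.
  rewrite <- Cinv_mult_zpow by exact Ht. apply poch_inv; nonzero.
Qed.

Definition monomial (q t a b : C) (e1 e2 e3 e4 : Z) : C :=
  zpow q e1 * zpow t e2 * zpow a e3 * zpow b e4.

Section Monomials.

Variables (q t a b : C).
Hypotheses (Hq : q <> 0) (Ht : t <> 0) (Ha : a <> 0) (Hb : b <> 0).

Lemma monomial_mult (e1 e2 e3 e4 f1 f2 f3 f4 : Z) :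
  monomial q t a b e1 e2 e3 e4 * monomial q t a b f1 f2 f3 f4 =
  monomial q t a b (e1 + f1) (e2 + f2) (e3 + f3) (e4 + f4).
Proof. unfold monomial. rewrite !zpow_add_r by assumption. ring. Qed.

Lemma monomial_qt (e1 e2 : Z) : zpow q e1 * zpow t e2 = monomial q t a b e1 e2 0 0.
Proof. unfold monomial. simpl. ring. Qed.

Lemma zpow_qt_monomial (e : Z) : zpow (q * Cinv t) e = monomial q t a b e (- e) 0 0.
Proof. unfold monomial. rewrite zpow_mul_l, zpow_inv_l, zpow_opp_r by assumption. simpl. ring. Qed.

Lemma zpow_qba_monomial (e : Z) : zpow (q * b * Cinv a) e = monomial q t a b e 0 (- e) e.
Proof.
  unfold monomial. rewrite !zpow_mul_l, zpow_inv_l, zpow_opp_r by assumption. simpl. ring.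
Qed.

Lemma zpow_qbat_monomial (e : Z) :
  zpow (q * b * Cinv (a * t)) e = monomial q t a b e (- e) (- e) e.
Proof.
  unfold monomial. rewrite !zpow_mul_l, zpow_inv_l, zpow_mul_l, !zpow_opp_r by nonzero.
  rewrite Cinv_mult_distr. ring.
Qed.

Lemma monomial_shift (L e1 e2 e3 e4 : Z) :
  monomial q t (a * zpow t (2 * L)) (b * zpow t L) e1 e2 e3 e4 =
  monomial q t a b e1 (e2 + 2 * L * e3 + L * e4) e3 e4.
Proof. unfold monomial. rewrite !zpow_mul_l, !zpow_mul_r, !zpow_add_r by assumption. ring. Qed.

End Monomials.

(** * The coefficient H *)

Definition Hfactor1 (q p t b : C) (L M : nat -> Z) (i j : nat) : C :=
  let P := poch p q in
  let mon (e1 e2 : Z) (c : C) := Cmult (Cmult (zpow q e1) (zpow t e2)) c in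
  let zi := Z.of_nat i in let zj := Z.of_nat j in
  let m := (M (j - 1)%nat - L j)%Z in
  Cmult
   (Cdiv (Cmult (P (mon (M i - M (j - 1)%nat)%Z (zj - zi)%Z (RtoC 1)) m)
                (P (mon (L i + L j)%Z (3 - zj - zi)%Z b) m))
         (Cmult (P (mon (M i - M (j - 1)%nat + 1)%Z (zj - zi - 1)%Z (RtoC 1)) m)
                (P (mon (L i + L j + 1)%Z (2 - zj - zi)%Z b) m)))
   (Cdiv (P (mon (L i - M (j - 1)%nat + 1)%Z (zj - zi - 1)%Z (RtoC 1)) m)
         (P (mon (L i - M (j - 1)%nat)%Z (zj - zi)%Z (RtoC 1)) m)).

Definition Hfactor2 (q p t b : C) (L M : nat -> Z) (i j : nat) : C :=
  let P := poch p q in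
  let mon (e1 e2 : Z) (c : C) := Cmult (Cmult (zpow q e1) (zpow t e2)) c in
  let zi := Z.of_nat i in let zj := Z.of_nat j in
  let m := (M (j - 1)%nat - L j)%Z in
  Cdiv (P (mon (M i + L j + 1)%Z (1 - zj - zi)%Z b) m)
       (P (mon (M i + L j)%Z (2 - zj - zi)%Z b) m).

Lemma Hcoef_factors (q p t b : C) (lam mu : list nat) :
  Hcoef q p t b lam mu =
  cprod_range 1 (length lam) (fun i => cprod_range (S i) (length lam)
    (Hfactor1 q p t b (part lam) (part mu) i)) *
  cprod_range 1 (length lam) (fun i => cprod_range (S (S i)) (S (length lam))
    (Hfactor2 q p t b (part lam) (part mu) i)).
Proof. reflexivity. Qed.

Section HInversion.

Variables (p q t b : C).
Hypotheses (Hp : (Cmod p < 1)%R) (Hq : q <> 0) (Ht : t <> 0) (Hb : b <> 0).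

Lemma qt_monomial_inv (e1 e2 : Z) (c : C) :
  zpow (Cinv q) e1 * zpow (Cinv t) e2 * Cinv c = Cinv (zpow q e1 * zpow t e2 * c).
Proof. rewrite !zpow_inv_l, !Cinv_mult_distr by assumption. reflexivity. Qed.

Lemma qt_monomial_shift (e1 e2 f1 f2 : Z) (c : C) : f1 = (e1 + 1)%Z -> f2 = (e2 - 1)%Z ->
  zpow q f1 * zpow t f2 * c = q * Cinv t * (zpow q e1 * zpow t e2 * c).
Proof.
  intros -> ->. change (e2 - 1)%Z with (e2 + -1)%Z.
  rewrite !zpow_add_r by assumption. simpl. field. exact Ht.
Qed.

(** In both factors the arguments of the denominator symbols are q/t times
    those of the numerator, so the inversion factors cancel up to (q/t)^(±m). *)
Lemma Hfactor1_inv (L M : nat -> Z) (i j : nat) :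
  Hfactor1 (Cinv q) p (Cinv t) (Cinv b) L M i j
  = zpow (q * Cinv t) (M (j - 1)%nat - L j) * Hfactor1 q p t b L M i j.
Proof.
  unfold Hfactor1. cbv beta zeta.
  rewrite <- Cinv_1, !qt_monomial_inv, Cinv_1, !poch_inv by nonzero.
  set (zi := Z.of_nat i). set (zj := Z.of_nat j).
  rewrite
    (qt_monomial_shift (M i - M (j - 1)%nat) (zj - zi) (M i - M (j - 1)%nat + 1) (zj - zi - 1)),
    (qt_monomial_shift (L i + L j) (3 - zj - zi) (L i + L j + 1) (2 - zj - zi)),
    (qt_monomial_shift (L i - M (j - 1)%nat) (zj - zi) (L i - M (j - 1)%nat + 1) (zj - zi - 1)),
    !(poch_inv_factor_scal q (q * Cinv t)), zpow_opp_r by (nonzero || lia).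
  unfold Cdiv. rewrite !Cinv_mult_distr. hide_inverses.
  field. repeat split; nonzero.
Qed.

Lemma Hfactor2_inv (L M : nat -> Z) (i j : nat) :
  Hfactor2 (Cinv q) p (Cinv t) (Cinv b) L M i j
  = zpow (q * Cinv t) (- (M (j - 1)%nat - L j)) * Hfactor2 q p t b L M i j.
Proof.
  unfold Hfactor2. cbv beta zeta.
  rewrite !qt_monomial_inv, !poch_inv by nonzero.
  set (zi := Z.of_nat i). set (zj := Z.of_nat j).
  rewrite (qt_monomial_shift (M i + L j) (2 - zj - zi) (M i + L j + 1) (1 - zj - zi)),
    !(poch_inv_factor_scal q (q * Cinv t)) by (nonzero || lia).
  unfold Cdiv. rewrite !Cinv_mult_distr. hide_inverses.
  field. repeat split; nonzero.
Qed.

End HInversion.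

Definition gap (lam mu : list nat) (j : nat) : Z := (part mu (j - 1) - part lam j)%Z.

Lemma Hcoef_exponent (lam mu : list nat) (n : nat) : length lam = n ->
  (zsum 1 n (fun i => zsum (S i) n (gap lam mu))
   + zsum 1 n (fun i => zsum (S (S i)) (S n) (fun j => - gap lam mu j)) =
   zsum 1 n (part mu) - zsum 1 n (fun i => part lam (S i)) - Z.of_nat n * part mu n)%Z.
Proof.
  intros Hlam. rewrite <- zsum_add.
  rewrite (zsum_ext 1 n _ (fun i => part mu i + - part lam (S i) + - part mu n)%Z).
  - rewrite !zsum_add, !zsum_opp, zsum_const, Nat.sub_succ, Nat.sub_0_r. ring.
  - intros i Hi. rewrite zsum_opp.
    pose proof (zsum_telescope_tail (gap lam mu) i n ltac:(lia)) as Htel.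
    unfold gap at 3 4 in Htel.
    rewrite !Nat.sub_succ, !Nat.sub_0_r, (part_overflow lam (S n)) in Htel by lia.
    lia.
Qed.

Lemma Hcoef_inv (p q t b : C) (lam mu : list nat) (n : nat) :
  (Cmod p < 1)%R -> q <> 0 -> t <> 0 -> b <> 0 -> length lam = n ->
  Hcoef (Cinv q) p (Cinv t) (Cinv b) lam mu =
  zpow (q * Cinv t) (zsum 1 n (part mu) - zsum 1 n (fun i => part lam (S i))
                     - Z.of_nat n * part mu n) * Hcoef q p t b lam mu.
Proof.
  intros Hp Hq Ht Hb Hlam.
  rewrite !Hcoef_factors, <- (Hcoef_exponent lam mu n), Hlam by exact Hlam.
  assert (E1 : forall i,
    cprod_range (S i) n (Hfactor1 (Cinv q) p (Cinv t) (Cinv b) (part lam) (part mu) i) =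
    zpow (q * Cinv t) (zsum (S i) n (gap lam mu))
    * cprod_range (S i) n (Hfactor1 q p t b (part lam) (part mu) i)).
  { intros i. rewrite <- cprod_range_zpow_mult by nonzero.
    apply cprod_range_ext. intros j. apply Hfactor1_inv; assumption. }
  assert (E2 : forall i,
    cprod_range (S (S i)) (S n) (Hfactor2 (Cinv q) p (Cinv t) (Cinv b) (part lam) (part mu) i) =
    zpow (q * Cinv t) (zsum (S (S i)) (S n) (fun j => - gap lam mu j)%Z)
    * cprod_range (S (S i)) (S n) (Hfactor2 q p t b (part lam) (part mu) i)).
  { intros i. rewrite <- cprod_range_zpow_mult by nonzero.
    apply cprod_range_ext. intros j. apply Hfactor2_inv; assumption. }
  rewrite (cprod_range_ext _ _ _ _ E1), (cprod_range_ext _ _ _ _ E2).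
  rewrite !cprod_range_zpow_mult, zpow_add_r by nonzero. ring.
Qed.

(** * The one-variable function *)

Definition W1_ratio (x q p t a b : C) (lam mu : list nat) : C :=
  let PP := poch_part p q t in
  Cdiv (Cmult (Cmult (PP (Cinv x) lam) (PP (Cmult a x) lam))
              (Cmult (PP (Cdiv (Cmult (Cmult q b) x) t) mu)
                     (PP (Cdiv (Cmult q b) (Cmult (Cmult a x) t)) mu)))
       (Cmult (Cmult (PP (Cinv x) mu) (PP (Cmult a x) mu))
              (Cmult (PP (Cmult (Cmult q b) x) lam)
                     (PP (Cdiv (Cmult q b) (Cmult a x)) lam))).

Definition W1_factor (q p t b : C) (lam mu : list nat) (i : nat) : C :=
  let zi := Z.of_nat i in
  let bt := Cmult b (zpow t (1 - 2 * zi)) in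
  let s := (part mu i + part lam (S i))%Z in
  Cmult (Cmult
    (Cdiv (Eth p (Cmult bt (zpow q (2 * part mu i)))) (Eth p bt))
    (Cdiv (poch p q bt s)
          (poch p q (Cmult (Cmult b q) (zpow t (- 2 * zi))) s)))
    (zpow t (zi * (part mu i - part lam (S i)))).

Lemma W1_factors (x q p t a b : C) (lam mu : list nat) :
  W1 x q p t a b lam mu =
  if interlaces lam mu then
    Hcoef q p t b lam mu * W1_ratio x q p t a b lam mu *
    cprod_range 1 (length lam) (W1_factor q p t b lam mu)
  else 0.
Proof. reflexivity. Qed.

(** With c1 = qb/a and c2 = qb/(at), the λ-symbols of the denominator are
    taken at c1 times the arguments a x and 1/x of the numerator, and the
    μ-symbols of the numerator at c2 times those of the denominator. *)
Lemma W1_ratio_inv (x p q t a b : C) (lam mu : list nat) : (Cmod p < 1)%R ->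
  x <> 0 -> q <> 0 -> t <> 0 -> a <> 0 -> b <> 0 ->
  W1_ratio (Cinv x) (Cinv q) p (Cinv t) (Cinv a) (Cinv b) lam mu =
  zpow (q * b * Cinv a) (2 * psize lam) * zpow (q * b * Cinv (a * t)) (- 2 * psize mu) *
  W1_ratio x q p t a b lam mu.
Proof.
  intros Hp Hx Hq Ht Ha Hb. unfold W1_ratio. cbv zeta.
  set (c1 := q * b * Cinv a). set (c2 := q * b * Cinv (a * t)).
  assert (Hc1 : c1 <> 0) by (unfold c1; nonzero).
  assert (Hc2 : c2 <> 0) by (unfold c2; nonzero).
  replace (Cinv q * Cinv b * Cinv x / Cinv t) with (Cinv (c2 * (a * x)))
    by (unfold c2; field; auto).
  replace (Cinv q * Cinv b / (Cinv a * Cinv x * Cinv t)) with (Cinv (c2 * Cinv x))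
    by (unfold c2; field; auto).
  replace (Cinv q * Cinv b * Cinv x) with (Cinv (c1 * (a * x)))
    by (unfold c1; field; auto).
  replace (Cinv q * Cinv b / (Cinv a * Cinv x)) with (Cinv (c1 * Cinv x))
    by (unfold c1; field; auto).
  rewrite <- Cinv_mult_distr.
  replace (q * b * x / t) with (c2 * (a * x)) by (unfold c2; field; auto).
  replace (q * b / (a * x * t)) with (c2 * Cinv x) by (unfold c2; field; auto).
  replace (q * b * x) with (c1 * (a * x)) by (unfold c1; field; auto).
  replace (q * b / (a * x)) with (c1 * Cinv x) by (unfold c1; field; auto).
  rewrite !poch_part_inv, !poch_part_inv_factor_scal by nonzero.
  replace (2 * psize lam)%Z with (psize lam + psize lam)%Z by ring.
  replace (-2 * psize mu)%Z with (- (psize mu + psize mu))%Z by ring.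
  rewrite !zpow_opp_r, !zpow_add_r by assumption.
  unfold Cdiv. rewrite !Cinv_mult_distr. hide_inverses.
  field. repeat split; nonzero.
Qed.

Lemma W1_factor_inv (p q t b : C) (lam mu : list nat) (i : nat) :
  (Cmod p < 1)%R -> q <> 0 -> t <> 0 -> b <> 0 ->
  W1_factor (Cinv q) p (Cinv t) (Cinv b) lam mu i =
  zpow q (part lam (S i) - part mu i) *
  zpow t (- (part mu i + part lam (S i)) - 2 * (Z.of_nat i * (part mu i - part lam (S i)))) *
  W1_factor q p t b lam mu i.
Proof.
  intros Hp Hq Ht Hb. unfold W1_factor. cbv zeta.
  set (s := (part mu i + part lam (S i))%Z).
  set (e := (Z.of_nat i * (part mu i - part lam (S i)))%Z).
  set (bt := b * zpow t (1 - 2 * Z.of_nat i)).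
  assert (Hbt : bt <> 0) by (unfold bt; nonzero).
  rewrite <- Cinv_mult_zpow, <- Cinv_mult_distr, <- Cinv_mult_zpow by assumption. fold bt.
  rewrite <- Cinv_mult_zpow by assumption.
  replace (b * q * zpow t (-2 * Z.of_nat i)) with (q * Cinv t * bt).
  2: { unfold bt. replace (1 - 2 * Z.of_nat i)%Z with (-2 * Z.of_nat i + 1)%Z by ring.
       rewrite zpow_succ_r by exact Ht. field. exact Ht. }
  rewrite !Eth_inv, !poch_inv, poch_inv_factor_scal, zpow_inv_l by nonzero.
  rewrite (zpow_mul_l q), zpow_inv_l, !zpow_opp_r by assumption.
  replace (- s - 2 * e)%Z with (- s + (- e + - e))%Z by ring.
  replace (part lam (S i) - part mu i)%Z with (s + - (2 * part mu i))%Z by (unfold s; ring).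
  rewrite !zpow_add_r, !zpow_opp_r by assumption.
  unfold Cdiv. rewrite !Cinv_mult_distr. hide_inverses.
  field. repeat split; nonzero.
Qed.

Lemma interlaces_length (lam mu : list nat) : interlaces lam mu = true -> length mu = length lam.
Proof. unfold interlaces. intros H. apply andb_prop in H. symmetry. apply Nat.eqb_eq, H. Qed.

Lemma W1_inv (x p q t a b : C) (lam mu : list nat) : (Cmod p < 1)%R ->
  x <> 0 -> q <> 0 -> t <> 0 -> a <> 0 -> b <> 0 ->
  let n := length lam in
  W1 (Cinv x) (Cinv q) p (Cinv t) (Cinv a) (Cinv b) lam mu =
  monomial q t a b (2 * psize lam - 2 * psize mu - Z.of_nat n * part mu n)
    (2 * pn lam - 2 * pn mu - 2 * psize mu + Z.of_nat n * part mu n)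
    (- 2 * psize lam + 2 * psize mu) (2 * psize lam - 2 * psize mu) *
  W1 x q p t a b lam mu.
Proof.
  intros Hp Hx Hq Ht Ha Hb n. rewrite !W1_factors.
  destruct (interlaces lam mu) eqn:Hint; [|ring].
  pose proof (interlaces_length _ _ Hint) as Hlen.
  rewrite (Hcoef_inv p q t b lam mu n), W1_ratio_inv by auto.
  rewrite (cprod_range_ext _ _ _ _ (fun i => W1_factor_inv p q t b lam mu i Hp Hq Ht Hb)).
  rewrite !cprod_range_mult, !cprod_range_zpow by assumption.
  rewrite (zpow_qt_monomial q t a b), (zpow_qba_monomial q t a b),
    (zpow_qbat_monomial q t a b), (monomial_qt q t a b) by assumption.
  fold n.
  assert (Sm : zsum 1 n (part mu) = psize mu) by (rewrite psize_zsum, Hlen; reflexivity).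
  assert (Eq : zsum 1 n (fun i => part lam (S i) - part mu i)%Z
               = (zsum 1 n (fun i => part lam (S i)) - psize mu)%Z)
    by (rewrite zsum_sub, Sm; reflexivity).
  assert (Et : zsum 1 n (fun i => - (part mu i + part lam (S i))
                                  - 2 * (Z.of_nat i * (part mu i - part lam (S i))))%Z
               = (2 * pn lam - 2 * pn mu - 3 * psize mu - zsum 1 n (fun i => part lam (S i)))%Z).
  { rewrite (zsum_ext 1 n _ (fun i => 2 * (Z.of_nat i * part lam (S i))
       - (2 * (Z.of_nat i * part mu i) + (part mu i + part lam (S i))))%Z) by (intros; ring).
    rewrite zsum_sub, !zsum_add, !zsum_scal, Sm, zsum_index_part_succ, zsum_index_part
      by (assumption || reflexivity).
    ring. }
  rewrite Sm, Eq, Et.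
  set (H := Hcoef q p t b lam mu). set (R := W1_ratio x q p t a b lam mu).
  set (P := cprod_range 1 n (W1_factor q p t b lam mu)).
  match goal with |- ?M1 * _ * (?M2 * ?M3 * _) * (?M4 * _) = _ =>
    transitivity (M1 * M2 * M3 * M4 * (H * R * P)); [ring|] end.
  rewrite !monomial_mult by assumption. f_equal. f_equal; lia.
Qed.

(** * The branching rule *)

Lemma interlaces_part (lam mu : list nat) (i : nat) : interlaces lam mu = true ->
  (1 <= i <= length lam)%nat -> (part lam (S i) <= part mu i <= part lam i)%Z.
Proof.
  unfold interlaces. intros H Hi. apply andb_prop in H as [_ H].
  rewrite forallb_forall in H. specialize (H i). rewrite in_seq in H.
  destruct (andb_prop _ _ (H ltac:(lia))) as [H1 H2]. apply Z.leb_le in H1, H2. lia.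
Qed.

Lemma interlacing_below_length (lam nu : list nat) :
  In nu (interlacing_below lam) -> length nu = length lam.
Proof.
  revert nu. induction lam as [|l rest IH]; intros nu Hin; simpl in Hin.
  - destruct Hin as [<-|[]]. reflexivity.
  - apply in_flat_map in Hin as [v [_ Hv]].
    apply in_map_iff in Hv as [r [<- Hr]]. simpl. rewrite (IH r Hr). reflexivity.
Qed.

Lemma Wm_cons_cons (y z : C) (zs : list C) (q p t a b : C) (lam mu : list nat) :
  let L := Z.of_nat (length (z :: zs)) in
  Wm (y :: z :: zs) q p t a b lam mu =
  csuml (map (fun nu =>
    W1 (y * zpow t (- L)) q p t (a * zpow t (2 * L)) (b * zpow t L) lam nu *
    Wm (z :: zs) q p t a b nu mu) (interlacing_below lam)).
Proof. reflexivity. Qed.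

(** Interlacing gives ν_k <= ρ_{k-1}: a branching step moves a nonzero part
    down by at most one position, so fewer than k steps cannot reach 0. *)
Lemma Wm_zero_of_nonzero_part (zs : list C) (q p t a b : C) (nu : list nat) (k : nat) :
  (length zs < k <= length nu)%nat -> part nu k <> 0%Z ->
  Wm zs q p t a b nu (repeat 0%nat (length nu)) = 0.
Proof.
  revert nu k. induction zs as [|y [|z zs] IH]; intros nu k Hk Hnz.
  - simpl. destruct (list_eq_dec Nat.eq_dec nu (repeat 0%nat (length nu))) as [E|E];
      [|reflexivity].
    exfalso. apply Hnz. rewrite E. apply part_repeat_0.
  - simpl Wm. rewrite W1_factors.
    destruct (interlaces nu (repeat 0%nat (length nu))) eqn:Hint; [|reflexivity].
    simpl in Hk. pose proof (interlaces_part _ _ (k - 1) Hint ltac:(lia)) as Hb.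
    replace (S (k - 1)) with k in Hb by lia.
    rewrite part_repeat_0 in Hb. pose proof (part_nonneg nu k). lia.
  - rewrite Wm_cons_cons. apply csuml_map_0. intros rho Hrho.
    pose proof (interlacing_below_length _ _ Hrho) as Hlen.
    rewrite W1_factors. destruct (interlaces nu rho) eqn:Hint; [|ring].
    simpl length in *. pose proof (interlaces_part _ _ (k - 1) Hint ltac:(lia)) as Hb.
    replace (S (k - 1)) with k in Hb by lia.
    rewrite <- Hlen, (IH rho (k - 1)%nat); [ring | lia |].
    pose proof (part_nonneg nu k). lia.
Qed.

Lemma Wm_inv (zs : list C) (lam : list nat) (p q t a b : C) :
  (Cmod p < 1)%R -> q <> 0 -> t <> 0 -> a <> 0 -> b <> 0 ->
  List.Forall (fun x : C => x <> 0) zs -> zs <> [] -> (length zs <= length lam)%nat ->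
  Wm (map Cinv zs) (Cinv q) p (Cinv t) (Cinv a) (Cinv b) lam (repeat 0%nat (length lam)) =
  monomial q t a b (2 * psize lam) (2 * pn lam - 2 * (Z.of_nat (length zs) - 1) * psize lam)
    (-2 * psize lam) (2 * psize lam) *
  Wm zs q p t a b lam (repeat 0%nat (length lam)).
Proof.
  intros Hp Hq Ht Ha Hb Hzs Hne. revert lam.
  induction zs as [|y [|z zs] IH]; intros lam Hlen; [contradiction|..];
    inversion Hzs as [|? ? Hy Hzs']; subst.
  - simpl Wm. rewrite W1_inv, psize_repeat_0, pn_repeat_0, part_repeat_0 by assumption.
    f_equal. f_equal; simpl; lia.
  - change (map Cinv (y :: z :: zs)) with (Cinv y :: Cinv z :: map Cinv zs).
    rewrite !Wm_cons_cons, <- csuml_map_scal. simpl length. rewrite length_map.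
    set (L := Z.of_nat (S (length zs))).
    f_equal. apply map_ext_in. intros nu Hnu.
    pose proof (interlacing_below_length _ _ Hnu) as Hlnu.
    rewrite <- !Cinv_mult_zpow, W1_inv by nonzero.
    rewrite <- Hlnu. change (Cinv z :: map Cinv zs) with (map Cinv (z :: zs)).
    destruct (Z.eq_dec (part nu (length nu)) 0) as [Hnu0|Hnu0].
    + rewrite IH, Hnu0, monomial_shift by (auto; try discriminate; simpl in *; lia).
      set (W1nu := W1 _ q p t _ _ lam nu). set (Wmnu := Wm (z :: zs) q p t a b nu _).
      match goal with |- ?M1 * _ * (?M2 * _) = _ =>
        transitivity (M1 * M2 * (W1nu * Wmnu)); [ring|] end.
      rewrite monomial_mult by assumption. f_equal. f_equal; unfold L; simpl length; lia.
    + rewrite !(Wm_zero_of_nonzero_part _ _ _ _ _ _ nu (length nu))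
        by (rewrite ?length_map; simpl in *; lia).
      ring.
Qed.

Theorem mainTheorem9 (n : nat) (lam : list nat) (xs : list C) (q p t a b : C) :
  length lam = n -> is_partition lam ->
  length xs = n ->
  (Cmod p < 1)%R ->
  q <> RtoC 0 -> t <> RtoC 0 -> a <> RtoC 0 -> b <> RtoC 0 ->
  List.Forall (fun x => x <> RtoC 0) xs ->
  generic p q t a b xs ->
  Wpart (map Cinv xs) (Cinv q) p (Cinv t) (Cinv a) (Cinv b) lam
  = Cmult (Cmult (Cmult (Cmult
      (zpow a (-2 * psize lam)) (zpow b (2 * psize lam)))
      (zpow q (2 * psize lam)))
      (zpow t (2 * pn lam - 2 * (Z.of_nat n - 1) * psize lam)))
    (Wpart xs q p t a b lam).
Proof.
  intros Hlam _ Hxs Hp Hq Ht Ha Hb Hnz _. unfold Wpart.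
  destruct xs as [|x xs].
  - subst n. destruct lam; [simpl; ring | discriminate].
  - rewrite Wm_inv, Hxs by (auto; try discriminate; lia).
    unfold monomial. ring.
Qed.
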